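(* For $n\ge3$, $\mathfrak a_{16}(n)=\{g\in\mathfrak{su}(2^n): g^T=-g\}=\mathfrak{so}(2^n)$.
   Context: Pauli matrices $I,X,Y,Z$; $A_jB_{j+1}$ denotes the length-$n$ Pauli string with $A$ at position $j$, $B$ at $j+1$, $I$ elsewhere. $\mathfrak{su}(N)$ is the Lie algebra of traceless skew-Hermitian matrices and $\mathfrak{so}(N)$ the real skew-symmetric ones. For a set $S$ of Pauli strings, $\mathrm{Lie}\langle S\rangle$ is the smallest real Lie subalgebra of $\mathfrak u(2^n)$ containing $\{iP:P\in S\}$. $\mathfrak a_{16}(n)=\mathrm{Lie}\langle X_jY_{j+1},Y_jX_{j+1},Y_jZ_{j+1},Z_jY_{j+1}:1\le j\le n-1\rangle$. *)

From HB Require Import structures.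
From mathcomp Require Import all_boot all_order all_algebra.
From mathcomp Require Import reals.
From mathcomp.real_closed Require Import complex.

Set Implicit Arguments.
Unset Strict Implicit.
Unset Printing Implicit Defensive.

Import Order.TTheory GRing.Theory Num.Theory.
Local Open Scope ring_scope.

Section Pauli.
Variable R : rcfType.
Local Notation C := (complex R).

Definition ci : C := Complex 0 1.
Definition creal (r : R) : C := Complex r 0.

(* Pauli matrices indexed by 'I_4 : 0 = I, 1 = X, 2 = Y, 3 = Z. *)
Definition pauli (a : 'I_4) : 'M[C]_2 :=
  \matrix_(i < 2, j < 2)
    match val a with
    | 0 => if val i == val j then 1 else 0
    | 1 => if val i == val j then 0 else 1
    | 2 => if val i == val j then 0 else (if val i == 0 then - ci else ci)
    | _ => if val i == val j then (if val i == 0 then 1 else -1) else 0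
    end.

Definition pI : 'I_4 := inord 0.
Definition pX : 'I_4 := inord 1.
Definition pY : 'I_4 := inord 2.
Definition pZ : 'I_4 := inord 3.

Definition bit (k : nat) (i : nat) : 'I_2 := inord (odd (i %/ 2 ^ k)).

(* The Pauli string s_0 (x) s_1 (x) ... (x) s_{n-1}, Kronecker product written
   entrywise: qubit k corresponds to binary digit k of the row/column index. *)
Definition pstring (n : nat) (s : 'I_n -> 'I_4) : 'M[C]_(2 ^ n) :=
  \matrix_(i, j) \prod_(k < n) pauli (s k) (bit k i) (bit k j).

Definition two_site (n j : nat) (A B : 'I_4) : 'I_n -> 'I_4 :=
  fun k => if val k == j then A else if val k == j.+1 then B else pI.

Inductive lie_gen (N : nat) (G : 'M[C]_N -> Prop) : 'M[C]_N -> Prop :=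
| lie_base g : G g -> lie_gen G g
| lie_zero : lie_gen G 0
| lie_add g h : lie_gen G g -> lie_gen G h -> lie_gen G (g + h)
| lie_scale (r : R) g : lie_gen G g -> lie_gen G (creal r *: g)
| lie_bracket g h : lie_gen G g -> lie_gen G h -> lie_gen G (g * h - h * g).

Definition lie_of_paulis (n : nat) (S : ('I_n -> 'I_4) -> Prop) : 'M[C]_(2 ^ n) -> Prop :=
  lie_gen (fun g => exists s, S s /\ g = ci *: pstring s).

(* generating Pauli strings of a_16(n): X_jY_{j+1}, Y_jX_{j+1}, Y_jZ_{j+1},
   Z_jY_{j+1}, for 1 <= j <= n-1 (here 0 <= j, j+1 < n) *)
Definition a16_gens (n : nat) (s : 'I_n -> 'I_4) : Prop :=
  exists j : nat, (j.+1 < n)%N /\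
    (s = @two_site n j pX pY \/ s = @two_site n j pY pX \/
     s = @two_site n j pY pZ \/ s = @two_site n j pZ pY).

Definition a16 (n : nat) : 'M[C]_(2 ^ n) -> Prop := lie_of_paulis (@a16_gens n).

Definition adjoint N (g : 'M[C]_N) : 'M[C]_N := (map_mx (@conjc R) g)^T.

Definition in_su N (g : 'M[C]_N) : Prop := adjoint g = - g /\ \tr g = 0.

End Pauli.

(* Pauli strings P_s form a basis of the 2^n x 2^n matrices, each P_s is Hermitian and
   P_s^T = (-1)^#Y(s) P_s, where #Y(s) counts the letters Y of s.  Hence the real
   skew-symmetric matrices are exactly the real span of the i P_s with #Y(s) odd; they
   form a Lie algebra containing the generators, so a_16(n) is contained in so(2^n).
   Conversely, if s and t anticommute then [i P_s, i P_t] is a nonzero real multiple of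
   i P_st.  On three consecutive qubits every word with an odd number of Y is reached
   from the generators in this way, and multiplying by such words clears the last
   letter of the window while keeping #Y odd; induction on the support then gives every
   i P_s with #Y(s) odd as soon as n >= 3.  The two facts about three-letter words are
   finite and checked by computation. *)

From HB Require Import structures.
From mathcomp Require Import all_boot all_order all_algebra.
From mathcomp Require Import reals.
From mathcomp.real_closed Require Import complex.
From mathcomp Require Import ring zify.

Set Implicit Arguments.
Unset Strict Implicit.
Unset Printing Implicit Defensive.
Import GRing.Theory Num.Theory.
Local Open Scope ring_scope.

(* Unlike [pI = inord 0] etc., these constants reduce under [/=] and [vm_compute]. *)
Definition lI : 'I_4 := @Ordinal 4 0 isT.
Definition lX : 'I_4 := @Ordinal 4 1 isT.
Definition lY : 'I_4 := @Ordinal 4 2 isT.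
Definition lZ : 'I_4 := @Ordinal 4 3 isT.
Definition letters : seq 'I_4 := [:: lI; lX; lY; lZ].

(* Up to phase, Pauli multiplication is the bitwise xor of the labels. *)
Definition lmul (a b : 'I_4) : 'I_4 := nth lI letters (Nat.lxor a b).
Definition lanti (a b : 'I_4) : bool := [&& a != lI, b != lI & a != b].
Definition isY (a : 'I_4) : bool := a == lY.

Lemma letterP (a : 'I_4) : [\/ a = lI, a = lX, a = lY | a = lZ].
Proof.
by case: a => [[|[|[|[|?]]]] Ha] //; [constructor 1|constructor 2|constructor 3|constructor 4];
  apply: val_inj.
Qed.

Ltac case_letter a := case: (letterP a) => ->.

Lemma pIE : pI = lI. Proof. by apply: val_inj; rewrite /= inordK. Qed.
Lemma pXE : pX = lX. Proof. by apply: val_inj; rewrite /= inordK. Qed.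
Lemma pYE : pY = lY. Proof. by apply: val_inj; rewrite /= inordK. Qed.
Lemma pZE : pZ = lZ. Proof. by apply: val_inj; rewrite /= inordK. Qed.

Lemma lmulC (a b : 'I_4) : lmul b a = lmul a b.
Proof. by case_letter a; case_letter b. Qed.
Lemma lmul1 (a : 'I_4) : lmul a lI = a.
Proof. by case_letter a. Qed.
Lemma lmulK (b a : 'I_4) : lmul (lmul a b) b = a.
Proof. by case_letter a; case_letter b. Qed.
Lemma lanti1 (a : 'I_4) : lanti a lI = false.
Proof. by case_letter a. Qed.
Lemma lanti_mulK (a b : 'I_4) : lanti (lmul a b) b = lanti a b.
Proof. by case_letter a; case_letter b. Qed.

Lemma ord2P (x : 'I_2) : x = ord0 \/ x = ord_max.
Proof. by case: x => [[|[|?]] Hx] //; [left|right]; apply: val_inj. Qed.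

Section PauliMatrices.
Variable R : rcfType.
Local Notation C := (complex R).
Local Notation ci := (ci R).
Local Notation creal := (@creal R).

Ltac case_ord2 x := case: (ord2P x) => ->.

Lemma ci_sqr : ci * ci = -1.
Proof. by rewrite -expr2 sqr_i. Qed.

Lemma creal1 : creal 1 = 1.
Proof. by []. Qed.

Lemma crealN1 : creal (-1) = -1.
Proof. by apply/eqP; rewrite eq_complex /= oppr0 !eqxx. Qed.

Lemma conj_ci : conjc ci = - ci.
Proof. by apply/eqP; rewrite eq_complex /= oppr0 !eqxx. Qed.

Lemma crealE (r : R) : creal r = real_complex R r.
Proof. by []. Qed.

Lemma subr_conjc (x : C) : x - conjc x = (ci * creal (complex.Im x)) *+ 2.
Proof.
case: x => a b; rewrite mulr2n; apply/eqP; rewrite eq_complex /= !mul0r.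
by apply/andP; split; apply/eqP; ring.
Qed.

Definition lsign (a b : 'I_4) : R :=
  if (val a, val b) \in [:: (1, 2); (2, 3); (3, 1)]%N then 1 else -1.
Definition lphase (a b : 'I_4) : C := if lanti a b then ci * creal (lsign a b) else 1.

Lemma lsign_neq0 (a b : 'I_4) : lsign a b != 0.
Proof. by rewrite /lsign; case: ifP; rewrite ?oppr_eq0 oner_eq0. Qed.

Lemma lphaseC (a b : 'I_4) : lphase b a = (-1) ^+ lanti a b * lphase a b.
Proof.
case_letter a; case_letter b; rewrite /lphase /lsign /=;
by rewrite ?(creal1, crealN1, expr0, expr1, mul1r, mulN1r, mulrN, mulr1, opprK).
Qed.

Lemma pauliM (a b : 'I_4) : pauli R a * pauli R b = lphase a b *: pauli R (lmul a b).
Proof.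
apply/matrixP => x y; rewrite -mulmxE !mxE !big_ord_recr big_ord0 /= add0r.
case_letter a; case_letter b; case_ord2 x; case_ord2 y;
rewrite /lphase /lmul /lanti /lsign !mxE /=;
by rewrite ?(creal1, crealN1, mulr0, mul0r, mulr1, mul1r, addr0, add0r, mulrN1, mulrN, mulNr,
             opprK, ci_sqr).
Qed.

Lemma tr_pauli (a : 'I_4) : (pauli R a)^T = (-1) ^+ isY a *: pauli R a.
Proof.
apply/matrixP => x y; rewrite !mxE.
case_letter a; case_ord2 x; case_ord2 y; rewrite ?mxE /=;
by rewrite ?(expr0, expr1, mulr0, mul0r, mulr1, mul1r, mulN1r, opprK, oppr0).
Qed.

Lemma conj_pauli (a : 'I_4) : map_mx conjc (pauli R a) = (pauli R a)^T.
Proof.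
apply/matrixP => x y; rewrite !mxE.
case_letter a; case_ord2 x; case_ord2 y; rewrite ?mxE /=;
by apply/eqP; rewrite eq_complex /= ?oppr0 ?opprK ?eqxx.
Qed.

Definition delta_coef (u v : 'I_2) (c : 'I_4) : C :=
  2^-1 * (if c == lI then (u == v)%:R
          else if c == lZ then (if u == v then (-1) ^+ (val u) else 0)
          else if c == lX then (u != v)%:R
          else (if u == v then 0 else if u == ord0 then ci else - ci)).

Lemma sum_delta_coef_pauli (u v x y : 'I_2) :
  \sum_(c < 4) delta_coef u v c * pauli R c x y = ((x == u) && (y == v))%:R.
Proof.
have half2 : (2^-1 : C) + 2^-1 = 1 by field.
rewrite !big_ord_recr big_ord0 /= add0r.
case_ord2 u; case_ord2 v; case_ord2 x; case_ord2 y; rewrite /delta_coef !mxE /=;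
rewrite ?(expr0, expr1, mulr0, mul0r, mulr1, mul1r, addr0, add0r, mulrN1, mulrN, mulNr, opprK,
          ci_sqr, subrr, half2) //.
all: by rewrite -mulrA ci_sqr mulrN1 ?opprK ?half2 ?subrr.
Qed.

End PauliMatrices.

Lemma bits_nat_inj (n i j : nat) : (i < 2 ^ n)%N -> (j < 2 ^ n)%N ->
  (forall k, (k < n)%N -> odd (i %/ 2 ^ k)%N = odd (j %/ 2 ^ k)%N) -> i = j.
Proof.
elim: n i j => [|n IHn] i j; first by rewrite expn0 !ltnS !leqn0 => /eqP-> /eqP->.
rewrite expnS => lt_i lt_j eq_bits.
have eq_half : (i %/ 2 = j %/ 2)%N.
  apply: IHn; rewrite ?ltn_divLR 1?mulnC // => k lt_kn.
  by rewrite -!divnMA -expnS; apply: eq_bits.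
have := eq_bits 0%N isT; rewrite expn0 !divn1 => eq_odd.
by rewrite (divn_eq i 2) (divn_eq j 2) eq_half !modn2 eq_odd.
Qed.

Section PauliStrings.
Variables (R : rcfType) (n : nat).
Local Notation C := (complex R).
Local Notation P := (@pstring R n).

Definition bits (i : 'I_(2 ^ n)) : {ffun 'I_n -> 'I_2} := [ffun k : 'I_n => bit k i].

Lemma bits_inj : injective bits.
Proof.
move=> i j /ffunP eq_ij; apply/val_inj/(@bits_nat_inj n); rewrite ?ltn_ord // => k lt_kn.
have := congr1 val (eq_ij (Ordinal lt_kn)); rewrite !ffunE /= !inordK //;
  by case: odd; case: odd.
Qed.

Lemma sum_bits (F : {ffun 'I_n -> 'I_2} -> C) :
  \sum_(i : 'I_(2 ^ n)) F (bits i) = \sum_f F f.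
Proof.
have bits_bij : bijective bits.
  by apply: (inj_card_bij bits_inj); rewrite card_ffun !card_ord.
by rewrite (reindex bits (onW_bij _ bits_bij)).
Qed.

Lemma eq_ord_bits (i j : 'I_(2 ^ n)) : (i == j) = [forall k : 'I_n, bit k i == bit k j].
Proof.
apply/eqP/forallP => [-> //|eq_ij]; apply: bits_inj; apply/ffunP => k.
by rewrite !ffunE; apply/eqP.
Qed.

Definition smul (s t : 'I_n -> 'I_4) (k : 'I_n) : 'I_4 := lmul (s k) (t k).

Lemma eq_pstring (s t : 'I_n -> 'I_4) : s =1 t -> P s = P t.
Proof.
by move=> eq_st; apply/matrixP => i j; rewrite !mxE; apply: eq_bigr => k _; rewrite eq_st.
Qed.

Lemma pstringM (s t : 'I_n -> 'I_4) :
  P s * P t = (\prod_k lphase R (s k) (t k)) *: P (smul s t).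
Proof.
apply/matrixP => i j; rewrite -mulmxE !mxE.
pose G k c := pauli R (s k) (bit k i) c * pauli R (t k) c (bit k j).
transitivity (\sum_(m : 'I_(2 ^ n)) \prod_k G k (bits m k)).
  by apply: eq_bigr => m _; rewrite !mxE -big_split; apply: eq_bigr => k _; rewrite ffunE.
rewrite (sum_bits (fun f => \prod_k G k (f k))) -bigA_distr_bigA -big_split /=.
apply: eq_bigr => k _; rewrite /G.
have /matrixP/(_ (bit k i) (bit k j)) := pauliM R (s k) (t k).
by rewrite -mulmxE mxE [in RHS]mxE.
Qed.

Definition cntY (s : 'I_n -> 'I_4) : nat := \sum_k isY (s k).

Lemma eq_cntY (s t : 'I_n -> 'I_4) : s =1 t -> cntY s = cntY t.
Proof. by move=> eq_st; apply: eq_bigr => k _; rewrite eq_st. Qed.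

Lemma tr_pstring (s : 'I_n -> 'I_4) : (P s)^T = (-1) ^+ cntY s *: P s.
Proof.
apply/matrixP => i j; rewrite !mxE -prodrXr -big_split /=; apply: eq_bigr => k _.
by have /matrixP/(_ (bit k i) (bit k j)) := tr_pauli R (s k); rewrite mxE [in RHS]mxE.
Qed.

Lemma conj_pstring (s : 'I_n -> 'I_4) : map_mx conjc (P s) = (P s)^T.
Proof.
apply/matrixP => i j; rewrite !mxE rmorph_prod; apply: eq_bigr => k _.
by have /matrixP/(_ (bit k i) (bit k j)) := conj_pauli R (s k); rewrite mxE [in RHS]mxE.
Qed.

Lemma delta_mx_pstring (u v : 'I_(2 ^ n)) :
  delta_mx u v = \sum_(s : {ffun 'I_n -> 'I_4})
                   (\prod_(k : 'I_n) delta_coef R (bit k u) (bit k v) (s k)) *: P s.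
Proof.
pose coef (k : 'I_n) := delta_coef R (bit k u) (bit k v).
apply/matrixP => i j; rewrite summxE mxE eq_ord_bits eq_ord_bits.
under eq_bigr => s _ do rewrite !mxE -big_split /=.
rewrite -(bigA_distr_bigA (fun k c => coef k c * pauli R c (bit k i) (bit k j))) /=.
under eq_bigr => k _ do rewrite sum_delta_coef_pauli.
have natb1 : nat_of_bool true = 1%N by [].
rewrite -natr_prod -(big_morph nat_of_bool (fun a b => esym (mulnb a b)) natb1) big_andE.
congr (nat_of_bool _)%:R; apply/andP/forallP => [[/forallP eq_u /forallP eq_v] k|eq_uv].
  by rewrite eq_u eq_v.
by split; apply/forallP => k; have /andP[] := eq_uv k.
Qed.

Lemma pstring_span (A : 'M[C]_(2 ^ n)) :
  exists c : {ffun 'I_n -> 'I_4} -> C, A = \sum_s c s *: P s.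
Proof.
pose span A := exists c : {ffun 'I_n -> 'I_4} -> C, A = \sum_s c s *: P s.
have span0 : span 0 by exists (fun=> 0); rewrite big1 // => s _; rewrite scale0r.
have spanD A1 A2 : span A1 -> span A2 -> span (A1 + A2).
  move=> [c1 ->] [c2 ->]; exists (fun s => c1 s + c2 s).
  by rewrite -big_split; apply: eq_bigr => s _; rewrite scalerDl.
have spanZ a A1 : span A1 -> span (a *: A1).
  move=> [c ->]; exists (fun s => a * c s).
  by rewrite scaler_sumr; apply: eq_bigr => s _; rewrite scalerA.
rewrite (matrix_sum_delta A).
apply: (big_ind span) => // u _; apply: (big_ind span) => // v _; apply: spanZ.
by rewrite delta_mx_pstring; eexists.
Qed.

End PauliStrings.

Section A16Strings.
Variables (R : rcfType) (n : nat).
Local Notation C := (complex R).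
Local Notation P := (@pstring R n).
Local Notation L := (@a16 R n).
Local Notation ci := (ci R).
Local Notation creal := (@creal R).

Lemma a16_sum (I : finType) (F : I -> 'M[C]_(2 ^ n)) :
  (forall i, L (F i)) -> L (\sum_i F i).
Proof. by move=> LF; apply: big_ind => //; [exact: lie_zero | exact: lie_add]. Qed.

Lemma a16_unscale (r : R) (g : 'M[C]_(2 ^ n)) : r != 0 -> L (creal r *: g) -> L g.
Proof.
move=> r_neq0 /(lie_scale r^-1).
by rewrite scalerA !crealE -rmorphM mulVf // rmorph1 scale1r.
Qed.

Definition a16_string (s : 'I_n -> 'I_4) : Prop := L (ci *: P s).

Lemma eq_a16_string (s t : 'I_n -> 'I_4) : s =1 t -> a16_string s -> a16_string t.
Proof. by move=> /(eq_pstring R) eq_st; rewrite /a16_string eq_st. Qed.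

Definition nanti (s t : 'I_n -> 'I_4) : nat := \sum_k lanti (s k) (t k).

Lemma prod_lphase_odd (s t : 'I_n -> 'I_4) : odd (nanti s t) ->
  exists2 r : R, r != 0 & \prod_k lphase R (s k) (t k) = ci * creal r.
Proof.
move=> odd_st; pose e := \prod_k (if lanti (s k) (t k) then lsign R (s k) (t k) else 1).
exists ((-1) ^+ (nanti s t)./2 * e).
  rewrite mulf_neq0 ?signr_eq0 //; apply/prodf_neq0 => k _.
  by case: lanti; rewrite ?lsign_neq0 ?oner_eq0.
have -> : \prod_k lphase R (s k) (t k) = ci ^+ nanti s t * creal e.
  rewrite crealE rmorph_prod -prodrXr -big_split; apply: eq_bigr => k _.
  by rewrite /lphase /=; case: lanti; rewrite ?expr1 ?expr0 ?mul1r ?rmorph1.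
rewrite -[in LHS](odd_double_half (nanti s t)) odd_st exprD expr1 -mul2n exprM.
by rewrite -mulrA !crealE rmorphM rmorphXn rmorphN1 -ci_sqr expr2.
Qed.

Lemma pstring_commutator (s t : 'I_n -> 'I_4) : odd (nanti s t) ->
  exists2 r : R, r != 0 &
    (ci *: P s) * (ci *: P t) - (ci *: P t) * (ci *: P s) = creal r *: (ci *: P (smul s t)).
Proof.
move=> odd_st; have [r r_neq0 phase_st] := prod_lphase_odd odd_st.
have phase_ts : \prod_k lphase R (t k) (s k) = - \prod_k lphase R (s k) (t k).
  under eq_bigr => k _ do rewrite lphaseC.
  by rewrite big_split /= prodrXr -signr_odd odd_st expr1 mulN1r.
have smulC : smul t s =1 smul s t by move=> k; rewrite /smul lmulC.
exists (-2 * r); first by rewrite mulf_neq0 ?oppr_eq0 ?pnatr_eq0.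
rewrite -!mulmxE -!scalemxAl -!scalemxAr !mulmxE !pstringM (eq_pstring R smulC).
rewrite !scalerA phase_ts phase_st -scalerBl; congr (_ *: _).
by rewrite !crealE rmorphM rmorphN rmorph_nat ci_sqr; ring.
Qed.

Lemma a16_string_mul (s t : 'I_n -> 'I_4) :
  a16_string s -> a16_string t -> odd (nanti s t) -> a16_string (smul s t).
Proof.
move=> Ls Lt /pstring_commutator [r r_neq0 comm_st].
by apply: (a16_unscale r_neq0); rewrite -comm_st; apply: lie_bracket.
Qed.

End A16Strings.

Definition word := ('I_4 * 'I_4 * 'I_4)%type.

Definition wmul (w g : word) : word := (lmul w.1.1 g.1.1, lmul w.1.2 g.1.2, lmul w.2 g.2).
Definition wanti (w g : word) : nat := (lanti w.1.1 g.1.1 + lanti w.1.2 g.1.2 + lanti w.2 g.2)%N.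
Definition wY (w : word) : nat := (isY w.1.1 + isY w.1.2 + isY w.2)%N.

Definition words : seq word :=
  [seq (ab, c) | ab <- [seq (a, b) | a <- letters, b <- letters], c <- letters].

Lemma mem_words (w : word) : w \in words.
Proof. by case: w => [[a b] c]; case_letter a; case_letter b; case_letter c. Qed.

Lemma wmulK (g w : word) : wmul (wmul w g) g = w.
Proof. by case: w => [[a b] c]; rewrite /wmul /= !lmulK. Qed.

Lemma wanti_mulK (w g : word) : wanti (wmul w g) g = wanti w g.
Proof. by rewrite /wanti /= !lanti_mulK. Qed.

Definition wgens : seq word :=
  [:: (lX, lY, lI); (lY, lX, lI); (lY, lZ, lI); (lZ, lY, lI);
      (lI, lX, lY); (lI, lY, lX); (lI, lY, lZ); (lI, lZ, lY)].

Fixpoint wclosure (d : nat) : seq word :=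
  if d is d'.+1 then
    let S := wclosure d' in
    undup (S ++ [seq wmul a b | a <- S, b <- [seq b <- S | odd (wanti a b)]])
  else wgens.

(* The parity test keeps #Y of the whole string odd along the induction on the
   support; depth 2 is needed for the words (I, I, c). *)
Fixpoint clearable (d : nat) (w : word) : bool :=
  (w.2 == lI) ||
  if d is d'.+1 then
    has (fun g => [&& odd (wY g), odd (wanti w g), odd (wY (wmul w g)) == odd (wY w)
                    & clearable d' (wmul w g)]) words
  else false.

Lemma wclosure_oddY : all (fun w => odd (wY w) ==> (w \in wclosure 2)) words.
Proof. by vm_compute. Qed.

Lemma clearable_all : all (clearable 2) words.
Proof. by vm_compute. Qed.

Definition idstring {n} : 'I_n -> 'I_4 := fun=> lI.

Lemma sum_indicator (n q m : nat) :
  (q < n)%N -> (\sum_(k < n) (if k == q :> nat then m else 0))%N = m.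
Proof. by move=> lt_qn; rewrite -big_mkcond (big_pred1 (Ordinal lt_qn)). Qed.

Section Window.
Variables (n p : nat).
Hypothesis lt_p : (p.+2 < n)%N.

Definition in_window (k : 'I_n) : bool := (p <= k <= p.+2)%N.

Definition put_word (u : 'I_n -> 'I_4) (w : word) (k : 'I_n) : 'I_4 :=
  if k == p :> nat then w.1.1 else if k == p.+1 :> nat then w.1.2
  else if k == p.+2 :> nat then w.2 else u k.

Lemma sum_put_word (F : 'I_4 -> 'I_4 -> nat) (u v : 'I_n -> 'I_4) (w g : word) :
  (\sum_k F (put_word u w k) (put_word v g k) =
   \sum_(k | ~~ in_window k) F (u k) (v k) + (F w.1.1 g.1.1 + F w.1.2 g.1.2 + F w.2 g.2))%N.
Proof.
under eq_bigr => k _.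
  have -> : F (put_word u w k) (put_word v g k) =
    ((if ~~ in_window k then F (u k) (v k) else 0) +
     ((if k == p :> nat then F w.1.1 g.1.1 else 0) +
      (if k == p.+1 :> nat then F w.1.2 g.1.2 else 0) +
      (if k == p.+2 :> nat then F w.2 g.2 else 0)))%N.
    rewrite /put_word /in_window; repeat case: ifP => ?; lia.
  over.
by rewrite big_split !big_split /= -big_mkcond !sum_indicator //; lia.
Qed.

Lemma nanti_put_word (u : 'I_n -> 'I_4) (w g : word) :
  nanti (put_word u w) (put_word idstring g) = wanti w g.
Proof. by rewrite /nanti (sum_put_word lanti) big1 // => k _; rewrite lanti1. Qed.

Lemma cntY_put_word (u : 'I_n -> 'I_4) (w : word) :
  cntY (put_word u w) = (\sum_(k | ~~ in_window k) isY (u k) + wY w)%N.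
Proof. exact: (sum_put_word (fun a _ => isY a) u u w w). Qed.

Lemma smul_put_word (u : 'I_n -> 'I_4) (w g : word) :
  smul (put_word u w) (put_word idstring g) =1 put_word u (wmul w g).
Proof. by move=> k; rewrite /smul /put_word /=; do 3 case: ifP => // _; rewrite lmul1. Qed.

Lemma put_word_two_site (A B : 'I_4) :
  put_word idstring (A, B, lI) =1 @two_site n p A B /\
  put_word idstring (lI, A, B) =1 @two_site n p.+1 A B.
Proof.
by split=> k; rewrite /put_word /two_site /idstring pIE /=; repeat case: ifP => ?; try lia.
Qed.

End Window.

Section WindowA16.
Variables (R : rcfType) (n p : nat).
Hypothesis lt_p : (p.+2 < n)%N.
Local Notation a16_string := (@a16_string R n).
Local Notation put_word := (@put_word n p).

Lemma a16_string_wgens (w : word) : w \in wgens -> a16_string (put_word idstring w).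
Proof.
have gen j A B : (j.+1 < n)%N ->
    [\/ (A, B) = (lX, lY), (A, B) = (lY, lX), (A, B) = (lY, lZ) | (A, B) = (lZ, lY)] ->
    a16_string (@two_site n j A B).
  move=> lt_j AB; apply: lie_base; exists (@two_site n j A B); split => //.
  exists j; split => //; rewrite pXE pYE pZE.
  by case: AB => -[-> ->]; [left | right; left | right; right; left | right; right; right].
have lt_p1 : (p.+1 < n)%N by lia.
rewrite !inE; repeat case/orP => [/eqP->|]; last move/eqP->.
all: first [ apply: (eq_a16_string (fun k => esym ((put_word_two_site lt_p _ _).1 k)))
           | apply: (eq_a16_string (fun k => esym ((put_word_two_site lt_p _ _).2 k))) ].
all: apply: gen => //.
all: first [by constructor 1 | by constructor 2 | by constructor 3 | by constructor 4].
Qed.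

Lemma a16_string_wclosure (d : nat) (w : word) :
  w \in wclosure d -> a16_string (put_word idstring w).
Proof.
elim: d w => [|d IHd] w /=; first exact: a16_string_wgens.
rewrite mem_undup mem_cat => /orP[/IHd // | /allpairsPdep[a [b [Sa]]]].
rewrite mem_filter => /andP[odd_ab Sb] ->.
apply: (eq_a16_string (smul_put_word p _ _ _)).
by apply: a16_string_mul; rewrite ?nanti_put_word //; apply: IHd.
Qed.

Lemma a16_string_oddword (w : word) : odd (wY w) -> a16_string (put_word idstring w).
Proof.
move=> odd_w; apply: (@a16_string_wclosure 2).
by have /implyP := allP wclosure_oddY w (mem_words w); apply.
Qed.

Lemma a16_string_clearable (d : nat) (u : 'I_n -> 'I_4) (w : word) : clearable d w ->
  (forall w', w'.2 = lI -> odd (wY w') = odd (wY w) -> a16_string (put_word u w')) ->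
  a16_string (put_word u w).
Proof.
elim: d w => [|d IHd] w; first by rewrite /= orbF => /eqP w2 cleared; apply: cleared.
case/orP => [/eqP w2 cleared | /seq.hasP[g _ /and4P[odd_g odd_wg /eqP Ywg clear_wg]] cleared].
  by apply: cleared.
have L_wg : a16_string (put_word u (wmul w g)).
  by apply: IHd => // w' w'2 Yw'; apply: cleared; rewrite ?Yw'.
have smul_wg : smul (put_word u (wmul w g)) (put_word idstring g) =1 put_word u w.
  by move=> k; rewrite smul_put_word wmulK.
apply: (eq_a16_string smul_wg).
apply: a16_string_mul => //; first exact: a16_string_oddword.
by rewrite nanti_put_word // wanti_mulK.
Qed.

End WindowA16.

Section OddY.
Variables (R : rcfType) (n : nat).
Local Notation a16_string := (@a16_string R n).

Definition string_at (s : 'I_n -> 'I_4) (m : nat) : 'I_4 :=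
  if insub m is Some k then s k else lI.

Definition window_of (p : nat) (s : 'I_n -> 'I_4) : word :=
  (string_at s p, string_at s p.+1, string_at s p.+2).

Lemma put_window_of (p : nat) (s u : 'I_n -> 'I_4) :
  (forall k, ~~ in_window p k -> u k = s k) -> put_word p u (window_of p s) =1 s.
Proof.
move=> u_out k; rewrite /put_word /window_of /string_at.
case: ifP => [/eqP <-|k_neq0]; first by rewrite valK.
case: ifP => [/eqP <-|k_neq1]; first by rewrite valK.
case: ifP => [/eqP <-|k_neq2]; first by rewrite valK.
by apply: u_out; rewrite /in_window; lia.
Qed.

Lemma a16_string_supported (p : nat) : (p.+2 < n)%N ->
  forall s, odd (cntY s) -> (forall k : 'I_n, (p.+2 < k)%N -> s k = lI) -> a16_string s.
Proof.
elim: p => [|p IHp] lt_p s odd_s supp.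
  have s_eq : put_word 0 idstring (window_of 0 s) =1 s.
    by apply: put_window_of => k; rewrite /in_window => out; rewrite supp //; lia.
  apply: (eq_a16_string s_eq); apply: a16_string_oddword => //.
  by move: odd_s; rewrite -(eq_cntY s_eq) cntY_put_word // big1.
have s_eq : put_word p.+1 s (window_of p.+1 s) =1 s by apply: put_window_of.
apply: (eq_a16_string s_eq); apply: (@a16_string_clearable _ _ _ _ 2) => //.
  exact: allP clearable_all _ (mem_words _).
move=> w' w'2 Yw'; apply: IHp; first by lia.
  by move: odd_s; rewrite -(eq_cntY s_eq) !cntY_put_word // ![odd (_ + wY _)]oddD Yw'.
move=> k lt_k; rewrite /put_word.
case: ifP => k_p1; first by lia.
case: ifP => k_p2; first by lia.
case: ifP => k_p3; first by [].
by apply: supp; lia.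
Qed.

Lemma a16_string_oddY : (3 <= n)%N -> forall s, odd (cntY s) -> a16_string s.
Proof.
move=> le3n s odd_s; apply: (@a16_string_supported (n - 3)) => // [|k]; first by lia.
by have := ltn_ord k; lia.
Qed.

End OddY.

Section RealSkew.
Variables (R : rcfType) (N : nat).
Local Notation C := (complex R).
Local Notation creal := (@creal R).

Definition real_skew (g : 'M[C]_N) : Prop := map_mx conjc g = g /\ g^T = - g.

Lemma real_skew0 : real_skew 0.
Proof. by split; rewrite ?map_mx0 ?trmx0 ?oppr0. Qed.

Lemma real_skewD (g h : 'M[C]_N) : real_skew g -> real_skew h -> real_skew (g + h).
Proof.
by move=> [gR gT] [hR hT]; split; rewrite ?map_mxD ?gR ?hR // linearD /= gT hT opprD.
Qed.

Lemma real_skewZ (r : R) (g : 'M[C]_N) : real_skew g -> real_skew (creal r *: g).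
Proof.
move=> [gR gT]; split; last by rewrite linearZ /= gT scalerN.
by rewrite map_mxZ gR; congr (_ *: _); apply/eqP; rewrite eq_complex /= oppr0 !eqxx.
Qed.

Lemma real_skew_commutator (g h : 'M[C]_N) :
  real_skew g -> real_skew h -> real_skew (g * h - h * g).
Proof.
move=> [gR gT] [hR hT]; split; first by rewrite map_mxB !map_mxM gR hR.
by rewrite linearB /= -!mulmxE !trmx_mul gT hT !mulmxN !mulNmx !opprK opprB.
Qed.

Lemma real_skew_su (g : 'M[C]_N) : real_skew g <-> in_su g /\ g^T = - g.
Proof.
rewrite /in_su /adjoint; split=> [[gR gT] | [[gA _] gT]]; last first.
  by split=> //; rewrite -[map_mx _ _]trmxK gA linearN /= gT opprK.
split=> //; split; first by rewrite gR.
have : \tr g *+ 2 == 0 by rewrite mulr2n -{1}mxtrace_tr gT linearN /= addNr.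
by rewrite mulrn_eq0 => /eqP.
Qed.

End RealSkew.

Section A16RealSkew.
Variables (R : rcfType) (n : nat).
Local Notation C := (complex R).
Local Notation P := (@pstring R n).
Local Notation ci := (ci R).

Lemma real_skew_ci_pstring (s : 'I_n -> 'I_4) : odd (cntY s) -> real_skew (ci *: P s).
Proof.
move=> odd_s; have sign_s : (-1) ^+ cntY s = -1 :> C by rewrite -signr_odd odd_s.
have conj_ciP : map_mx conjc (ci *: P s) = - ci *: (P s)^T.
  by rewrite map_mxZ conj_pstring; congr (_ *: _); exact: conj_ci.
split; first by rewrite conj_ciP tr_pstring sign_s scaleN1r scalerN scaleNr opprK.
by rewrite linearZ /= tr_pstring sign_s scaleN1r scalerN.
Qed.

Lemma cntY_two_site (j : nat) (A B : 'I_4) : (j.+1 < n)%N ->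
  cntY (@two_site n j A B) = (isY A + isY B)%N.
Proof.
move=> lt_j; rewrite /cntY (eq_bigr (fun k : 'I_n =>
    ((if k == j :> nat then isY A : nat else 0) +
     (if k == j.+1 :> nat then isY B : nat else 0))%N)).
  by rewrite big_split /= !sum_indicator //; lia.
by move=> k _; rewrite /two_site pIE -[val k]/(nat_of_ord k); repeat case: ifP => ? /=; lia.
Qed.

Lemma a16_real_skew (g : 'M[C]_(2 ^ n)) : a16 g -> real_skew g.
Proof.
elim=> {g} [_ [s [[j [lt_j gen_s]] ->]] | | g h _ Lg _ Lh | r g _ Lg | g h _ Lg _ Lh].
- apply: real_skew_ci_pstring.
  by case: gen_s => [|[|[|]]] ->; rewrite cntY_two_site // ?pXE ?pYE ?pZE.
- exact: real_skew0.
- exact: real_skewD.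
- exact: real_skewZ.
- exact: real_skew_commutator.
Qed.

Lemma real_skew_a16 (g : 'M[C]_(2 ^ n)) : (3 <= n)%N -> real_skew g -> a16 g.
Proof.
move=> le3n [gR gT]; have [c g_eq] := pstring_span g.
pose sign (s : 'I_n -> 'I_4) : C := (-1) ^+ cntY s.
(* averaging g over the symmetries g -> -g^T and g -> conj g, which fix it, kills
   every Pauli string with an even number of Y *)
have -> : g = \sum_(s : {ffun 'I_n -> 'I_4})
                 (((1 - sign s) * (c s - conjc (c s)) / 4) *: P s).
  have g4 : g = 4^-1 *: (g - g^T + map_mx conjc g - (map_mx conjc g)^T).
    rewrite gR gT opprK.
    have -> : g + g + g + g = 4%:R *: g by rewrite scaler_nat !mulrS mulr0n addr0 !addrA.
    by rewrite scalerA mulVf ?pnatr_eq0 // scale1r.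
  have gT_eq : g^T = \sum_s (c s * sign s) *: P s.
    rewrite {1}g_eq linear_sum; apply: eq_bigr => s _.
    by rewrite linearZ /= tr_pstring scalerA.
  have gbar_eq : map_mx conjc g = \sum_s (conjc (c s) * sign s) *: P s.
    rewrite {1}g_eq map_mx_sum; apply: eq_bigr => s _.
    by rewrite map_mxZ conj_pstring tr_pstring scalerA.
  have gbarT_eq : (map_mx conjc g)^T = \sum_s conjc (c s) *: P s.
    rewrite {1}g_eq map_mx_sum linear_sum; apply: eq_bigr => s _.
    by rewrite map_mxZ conj_pstring linearZ /= trmxK.
  rewrite {1}g4 gbarT_eq gbar_eq gT_eq g_eq -sumrB -big_split -sumrB scaler_sumr.
  apply: eq_bigr => s _; rewrite /= -scalerBl -scalerDl -scalerBl scalerA.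
  by congr (_ *: _); field.
apply: a16_sum => s; have [odd_s | even_s] := boolP (odd (cntY s)).
  have -> : (1 - sign s) * (c s - conjc (c s)) / 4 = creal (complex.Im (c s)) * ci.
    by rewrite /sign -signr_odd odd_s subr_conjc; field.
  by rewrite -scalerA; apply/lie_scale/a16_string_oddY.
by rewrite /sign -signr_odd (negbTE even_s) subrr !mul0r scale0r; apply: lie_zero.
Qed.

End A16RealSkew.

Unset Implicit Arguments.

Theorem mainTheorem18 (R : realType) (n : nat) (hn : (3 <= n)%N)
    (g : 'M[complex R]_(2 ^ n)) :
  @a16 R n g <-> (in_su g /\ g^T = - g).
Proof.
split=> [/a16_real_skew/real_skew_su // | /real_skew_su]; exact: real_skew_a16.
Qed.
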